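(* Let $X_1,X_2$ be locally compact Hausdorff spaces, $\mathcal{A}_i\subset\mathcal{C}_c(X_i)$ subalgebras and $N_i$ uniform norms on $\mathcal{A}_i$. For all Borel probability measures $\eta_1,m_1$ on $X_1$ and $\eta_2,m_2$ on $X_2$, \[ \mathrm{dist}_{N_1\otimes N_2}(\eta_1\otimes\eta_2,m_1\otimes m_2)\ll\max(\mathrm{dist}_{N_1}(\eta_1,m_1),\mathrm{dist}_{N_2}(\eta_2,m_2)), \] where the implied constant depends only on $N_1$ and $N_2$.
   Context: A norm $N$ on $\mathcal{A}\subset\mathcal{C}_c(X)$ is uniform if $\|\phi\|_\infty\le F\,N(\phi)$ for some $F$ and all $\phi$. $\mathrm{dist}_N(\mu,\nu)=\sup\{|\mu(\phi)-\nu(\phi)|:\phi\in\mathcal{A},N(\phi)\le1\}$. $N_1\otimes N_2$ is the projective tensor norm on the algebraic tensor product $\mathcal{A}_1\otimes\mathcal{A}_2\subset\mathcal{C}_c(X_1\times X_2)$: $(N_1\otimes N_2)(\phi)=\inf\sum_iN_1(\phi_{1i})N_2(\phi_{2i})$ over representations $\phi=\sum_i\phi_{1i}\otimes\phi_{2i}$. *)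

From HB Require Import structures.
From mathcomp Require Import all_boot all_order all_algebra.
From mathcomp Require Import all_classical all_reals all_analysis.
Set Implicit Arguments. Unset Strict Implicit. Unset Printing Implicit Defensive.
Import Order.TTheory GRing.Theory Num.Theory.
Import numFieldNormedType.Exports.
Local Open Scope classical_set_scope.
Local Open Scope ring_scope.

Definition borel (T : ptopologicalType) := g_sigma_algebraType (@open T).

Section defs.
Context {R : realType}.

Definition Cc {T : topologicalType} (phi : T -> R) :=
  continuous phi /\ compact (closure [set x | phi x != 0]).

Definition subalgebra_Cc {T : topologicalType} (A : set (T -> R)) :=
  [/\ (forall phi, A phi -> Cc phi),
      A (fun _ => 0),
      (forall phi psi, A phi -> A psi -> A (fun x => phi x + psi x)),
      (forall (a : R) phi, A phi -> A (fun x => a * phi x)) &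
      (forall phi psi, A phi -> A psi -> A (fun x => phi x * psi x))].

(* N is a norm on A (values of N outside A are irrelevant) *)
Definition norm_on {T : Type} (A : set (T -> R)) (N : (T -> R) -> R) :=
  [/\ (forall phi, A phi -> 0 <= N phi),
      (forall phi, A phi -> N phi = 0 -> phi = (fun _ => 0)),
      (forall (a : R) phi, A phi -> N (fun x => a * phi x) = `|a| * N phi) &
      (forall phi psi, A phi -> A psi ->
         N (fun x => phi x + psi x) <= N phi + N psi)].

Definition uniform_norm {T : Type} (A : set (T -> R)) (N : (T -> R) -> R) :=
  norm_on A N /\
  exists F : R, forall phi, A phi -> forall x, `|phi x| <= F * N phi.

Definition tensor_rep {T1 T2 : Type} (A1 : set (T1 -> R)) (A2 : set (T2 -> R))
  (phi : T1 * T2 -> R) (n : nat) (f1 : 'I_n -> T1 -> R) (f2 : 'I_n -> T2 -> R) :=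
  [/\ (forall i, A1 (f1 i)), (forall i, A2 (f2 i)) &
      phi = (fun z => \sum_(i < n) f1 i z.1 * f2 i z.2)].

Definition tensor_alg {T1 T2 : Type} (A1 : set (T1 -> R)) (A2 : set (T2 -> R)) :
  set (T1 * T2 -> R) :=
  [set phi | exists n f1 f2, @tensor_rep T1 T2 A1 A2 phi n f1 f2].

Definition tensor_norm {T1 T2 : Type} (A1 : set (T1 -> R)) (A2 : set (T2 -> R))
  (N1 : (T1 -> R) -> R) (N2 : (T2 -> R) -> R) (phi : T1 * T2 -> R) : \bar R :=
  ereal_inf [set s | exists n f1 f2, @tensor_rep T1 T2 A1 A2 phi n f1 f2 /\
                      s = (\sum_(i < n) N1 (f1 i) * N2 (f2 i))%:E].

Definition distN {d} {T : measurableType d} (A : set (T -> R))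
  (N : (T -> R) -> \bar R) (mu nu : set T -> \bar R) : \bar R :=
  ereal_sup [set `| (\int[mu]_x (phi x)%:E - \int[nu]_x (phi x)%:E)%E |%E
            | phi in [set phi | A phi /\ (N phi <= 1)%E]].

End defs.

From HB Require Import structures.
From mathcomp Require Import all_boot all_order all_algebra.
From mathcomp Require Import all_classical all_reals all_analysis.
From mathcomp Require Import measurable_realfun ring.
Import Order.TTheory GRing.Theory Num.Theory.
Import numFieldNormedType.Exports.
Local Open Scope classical_set_scope.
Local Open Scope ring_scope.
Set Implicit Arguments. Unset Strict Implicit.

(* By Fubini, for a representation phi = sum_i f1_i (x) f2_i the difference of
   the two product integrals of phi is sum_i (eta1 f1_i eta2 f2_i - m1 f1_i m2 f2_i).
   Writing each term as (eta1 - m1) f1_i * eta2 f2_i + m1 f1_i * (eta2 - m2) f2_i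
   and bounding |eta2 f2_i| <= F2 N2(f2_i), |m1 f1_i| <= F1 N1(f1_i) with the
   uniformity constants F_i, the difference is at most
   (F1 + F2) max(dist1, dist2) sum_i N1(f1_i) N2(f2_i); the infimum over
   representations turns the sum into (N1 (x) N2)(phi) <= 1. *)

Lemma continuous_borel_measurable (R : realType) (X : ptopologicalType)
    (f : X -> R) :
  continuous f -> measurable_fun [set: borel X] f.
Proof.
move=> /continuousP cf.
apply: (measurability _ (measurable_realfun.RGenOpens.measurableE R)).
move=> _ [_ [a [b ->] <-]]; apply: sub_sigma_algebra; rewrite setTI.
exact/cf/interval_open.
Qed.

Section bounded_Rintegral.
Context d (T : measurableType d) (R : realType) (P : probability T R).
Implicit Types (f : T -> R) (B : R).

Lemma bounded_integrable f B :
  measurable_fun setT f -> (forall x, `|f x| <= B) ->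
  P.-integrable setT (EFin \o f).
Proof.
move=> mf fB; apply: measurable_bounded_integrable => //.
  by apply: (le_lt_trans (probability_le1 P measurableT)); rewrite ltry.
exists B; split; first exact: num_real.
by move=> M BM x _; apply: le_trans (fB x) (ltW BM).
Qed.

Lemma integral_EFin_Rintegral f B :
  measurable_fun setT f -> (forall x, `|f x| <= B) ->
  (\int[P]_x (f x)%:E = (\int[P]_x f x)%:E)%E.
Proof.
by move=> mf fB; rewrite fineK // (integrable_fin_num _ (bounded_integrable mf fB)).
Qed.

Lemma normr_Rintegral_le f B :
  measurable_fun setT f -> (forall x, `|f x| <= B) ->
  `|\int[P]_x f x| <= B.
Proof.
move=> mf fB.
have nfB x : `|(Num.norm \o f) x| <= B by rewrite /= normr_id.
have inf := bounded_integrable (measurableT_comp (@normr_measurable R setT) mf) nfB.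
apply: le_trans (le_normr_Rintegral _ (bounded_integrable mf fB)) _ => //.
apply: le_trans (le_Rintegral _ inf (finite_measure_integrable_cst P B _) _) _ => //.
  by move=> x _; apply: fB.
rewrite (Rintegral_cst P) // (_ : fine _ = 1) ?mulr1 //.
exact: (congr1 fine (probability_setT P)).
Qed.

End bounded_Rintegral.

Section product_integral.
Context d1 d2 (T1 : measurableType d1) (T2 : measurableType d2) (R : realType).
Variables (P1 : probability T1 R) (P2 : probability T2 R).

Lemma integral_prod_mul (f : T1 -> R) (g : T2 -> R) (Bf Bg : R) :
  measurable_fun setT f -> measurable_fun setT g ->
  (forall x, `|f x| <= Bf) -> (forall y, `|g y| <= Bg) ->
  (\int[P1 \x P2]_z (f z.1 * g z.2)%:E =
   (\int[P1]_x f x * \int[P2]_y g y)%:E)%E.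
Proof.
move=> mf mg fB gB.
have mfg : measurable_fun setT (fun z : T1 * T2 => f z.1 * g z.2).
  by apply: measurable_funM; apply: measurableT_comp.
have fgB (z : T1 * T2) : `|f z.1 * g z.2| <= Bf * Bg.
  by rewrite normrM; apply: ler_pM.
rewrite -(integral12_prod_meas1 (bounded_integrable _ mfg fgB)) /fubini_F /=.
transitivity (\int[P1]_x ((f x)%:E * (\int[P2]_y g y)%:E))%E.
  apply: eq_integral => x _; under eq_integral do rewrite EFinM.
  rewrite integralZl ?(bounded_integrable _ mg gB) //.
  by rewrite (integral_EFin_Rintegral _ mg gB).
rewrite integralZr ?(bounded_integrable _ mf fB) //.
by rewrite (integral_EFin_Rintegral _ mf fB) -EFinM.
Qed.

Lemma integral_tensor_sum n (f1 : 'I_n -> T1 -> R) (f2 : 'I_n -> T2 -> R)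
    (B1 B2 : 'I_n -> R) :
  (forall i, measurable_fun setT (f1 i)) -> (forall i, measurable_fun setT (f2 i)) ->
  (forall i x, `|f1 i x| <= B1 i) -> (forall i y, `|f2 i y| <= B2 i) ->
  (\int[P1 \x P2]_z (\sum_(i < n) f1 i z.1 * f2 i z.2)%:E =
   (\sum_(i < n) \int[P1]_x f1 i x * \int[P2]_y f2 i y)%:E)%E.
Proof.
move=> mf1 mf2 f1B f2B.
have mf12 i : measurable_fun setT (fun z : T1 * T2 => f1 i z.1 * f2 i z.2).
  by apply: measurable_funM; apply: measurableT_comp.
have f12B i (z : T1 * T2) : `|f1 i z.1 * f2 i z.2| <= B1 i * B2 i.
  by rewrite normrM; apply: ler_pM.
under eq_integral do rewrite -sumEFin.
rewrite integral_sum //; last by move=> i; exact: bounded_integrable (mf12 i) (f12B i).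
rewrite -sumEFin; apply: eq_bigr => i _.
exact: integral_prod_mul.
Qed.

End product_integral.

Section distN_bounds.
Context d (T : measurableType d) (R : realType).
Variables (A : set (T -> R)) (N : (T -> R) -> R) (mu nu : {measure set T -> \bar R}).
Hypothesis normN : norm_on A N.

Lemma distN_ge0 : A (fun _ => 0) -> (0 <= distN A (fun f => (N f)%:E) mu nu)%E.
Proof.
case: normN => _ _ N_scale _ A0.
have N0 : N (fun _ => 0) = 0.
  by have := N_scale 0 _ A0; rewrite normr0 !mul0r.
apply: (le_trans _ (ereal_sup_ubound _)); last first.
  by exists (fun _ => 0) => //; split => //; rewrite N0 lee_fin.
exact: abse_ge0.
Qed.

Lemma Rintegral_distN_le (dmax : R) (f : T -> R) :
  (forall (a : R) g, A g -> A (fun x => a * g x)) -> A f ->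
  mu.-integrable setT (EFin \o f) -> nu.-integrable setT (EFin \o f) ->
  (distN A (fun f => (N f)%:E) mu nu <= dmax%:E)%E ->
  `|\int[mu]_x f x - \int[nu]_x f x| <= dmax * N f.
Proof.
case: normN => N_ge0 N_eq0 N_scale _ scaleA Af imu inu dist_le.
have [Nf0|Nf_neq0] := eqVneq (N f) 0.
  rewrite Nf0 mulr0 (N_eq0 f Af Nf0).
  by rewrite /Rintegral !integral0_eq // subrr normr0.
have Nf_gt0 : 0 < N f by rewrite lt0r Nf_neq0 N_ge0.
pose c := (N f)^-1; pose g x := c * f x.
have Ng : N g = 1 by rewrite N_scale // ger0_norm ?invr_ge0 ?N_ge0 // mulVf.
have integral_g (m : {measure set T -> \bar R}) : m.-integrable setT (EFin \o f) ->
    (\int[m]_x (g x)%:E = (c * \int[m]_x f x)%:E)%E.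
  move=> im; rewrite -RintegralZl // fineK // integrable_fin_num //.
  by under eq_fun do rewrite EFinM; exact: integrableZl.
have : (`|(\int[mu]_x (g x)%:E - \int[nu]_x (g x)%:E)%E|%E <= dmax%:E)%E.
  apply: (le_trans _ dist_le); apply: ereal_sup_ubound.
  by exists g => //; split; [exact: scaleA | rewrite Ng].
rewrite (integral_g _ imu) (integral_g _ inu) -EFinB abse_EFin lee_fin.
rewrite -mulrBr normrM ger0_norm ?invr_ge0 ?N_ge0 // -/c.
by rewrite ler_pdivrMl // mulrC.
Qed.

End distN_bounds.

Lemma le_mul_tensor_norm (R : realType) (T1 T2 : Type)
    (A1 : set (T1 -> R)) (A2 : set (T2 -> R))
    (N1 : (T1 -> R) -> R) (N2 : (T2 -> R) -> R) (phi : T1 * T2 -> R) (x K : R) :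
  0 <= K -> tensor_alg A1 A2 phi ->
  (forall n f1 f2, tensor_rep A1 A2 phi f1 f2 ->
     x <= K * \sum_(i < n) N1 (f1 i) * N2 (f2 i)) ->
  (x%:E <= K%:E * tensor_norm A1 A2 N1 N2 phi)%E.
Proof.
move=> K_ge0 [n0 [g1 [g2 rep0]]] x_le.
have [K0|K_neq0] := eqVneq K 0.
  by rewrite K0 mul0e lee_fin; have := x_le _ _ _ rep0; rewrite K0 mul0r.
have K_gt0 : 0 < K by rewrite lt0r K_neq0.
rewrite -lee_pdivrMl //; apply: le_ereal_inf_tmp => _ [n [f1 [f2 [rep ->]]]].
by rewrite -EFinM lee_fin ler_pdivrMl //; exact: x_le.
Qed.

Lemma uniform_norm_ge0_bound (R : realType) (T : Type) (A : set (T -> R))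
    (N : (T -> R) -> R) :
  uniform_norm A N ->
  exists2 F : R, 0 <= F & forall phi, A phi -> forall x, `|phi x| <= F * N phi.
Proof.
case=> -[N_ge0 _ _ _] [F supF]; exists (Num.max F 0); first by rewrite le_max lexx orbT.
move=> phi Aphi x; apply: le_trans (supF _ Aphi x) _.
by rewrite ler_wpM2r ?N_ge0 // le_max lexx.
Qed.

Section tensor_distance.
Context d1 d2 (T1 : measurableType d1) (T2 : measurableType d2) (R : realType).
Variables (A1 : set (T1 -> R)) (A2 : set (T2 -> R)).
Variables (N1 : (T1 -> R) -> R) (N2 : (T2 -> R) -> R) (F1 F2 : R).
Hypotheses (measA1 : forall f, A1 f -> measurable_fun setT f)
           (measA2 : forall f, A2 f -> measurable_fun setT f).
Hypotheses (scaleA1 : forall (a : R) f, A1 f -> A1 (fun x => a * f x))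
           (scaleA2 : forall (a : R) f, A2 f -> A2 (fun x => a * f x)).
Hypotheses (normN1 : norm_on A1 N1) (normN2 : norm_on A2 N2).
Hypotheses (F1_ge0 : 0 <= F1) (F2_ge0 : 0 <= F2).
Hypotheses (supF1 : forall f, A1 f -> forall x, `|f x| <= F1 * N1 f)
           (supF2 : forall f, A2 f -> forall x, `|f x| <= F2 * N2 f).

Lemma integral_tensor_rep (P1 : probability T1 R) (P2 : probability T2 R)
    phi n (f1 : 'I_n -> T1 -> R) (f2 : 'I_n -> T2 -> R) :
  tensor_rep A1 A2 phi f1 f2 ->
  (\int[P1 \x P2]_z (phi z)%:E =
   (\sum_(i < n) \int[P1]_x f1 i x * \int[P2]_y f2 i y)%:E)%E.
Proof.
case=> A1f1 A2f2 ->.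
apply: integral_tensor_sum => i.
- exact: measA1.
- exact: measA2.
- exact: supF1.
- exact: supF2.
Qed.

Variables (eta1 m1 : probability T1 R) (eta2 m2 : probability T2 R) (dmax : R).
Hypotheses (dist1_le : (distN A1 (fun f => (N1 f)%:E) eta1 m1 <= dmax%:E)%E)
           (dist2_le : (distN A2 (fun f => (N2 f)%:E) eta2 m2 <= dmax%:E)%E).

Lemma tensor_rep_diff_le phi n (f1 : 'I_n -> T1 -> R) (f2 : 'I_n -> T2 -> R) :
  tensor_rep A1 A2 phi f1 f2 ->
  `|\sum_(i < n) \int[eta1]_x f1 i x * \int[eta2]_y f2 i y -
    \sum_(i < n) \int[m1]_x f1 i x * \int[m2]_y f2 i y|
  <= dmax * (F1 + F2) * \sum_(i < n) N1 (f1 i) * N2 (f2 i).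
Proof.
case=> A1f1 A2f2 _.
rewrite -sumrB mulr_sumr; apply: le_trans (ler_norm_sum _ _ _) _.
apply: ler_sum => i _.
have [mf mg] := (measA1 (A1f1 i), measA2 (A2f2 i)).
have [fB gB] := (supF1 (A1f1 i), supF2 (A2f2 i)).
have dist_f := Rintegral_distN_le normN1 scaleA1 (A1f1 i)
  (bounded_integrable _ mf fB) (bounded_integrable _ mf fB) dist1_le.
have dist_g := Rintegral_distN_le normN2 scaleA2 (A2f2 i)
  (bounded_integrable _ mg gB) (bounded_integrable _ mg gB) dist2_le.
have m1f := normr_Rintegral_le m1 mf fB.
have eta2g := normr_Rintegral_le eta2 mg gB.
set a := \int[eta1]_x _ in dist_f *; set a' := \int[m1]_x _ in dist_f m1f *.
set b := \int[eta2]_y _ in dist_g eta2g *; set b' := \int[m2]_y _ in dist_g *.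
have -> : a * b - a' * b' = (a - a') * b + a' * (b - b') by ring.
apply: le_trans (ler_normD _ _) _; rewrite !normrM.
apply: le_trans (lerD (ler_pM _ _ dist_f eta2g) (ler_pM _ _ m1f dist_g)) _ => //.
by rewrite le_eqVlt; apply/predU1P; left; ring.
Qed.

Lemma distN_tensor_le : 0 <= dmax ->
  (distN (tensor_alg A1 A2) (tensor_norm A1 A2 N1 N2) (eta1 \x eta2) (m1 \x m2)
   <= (dmax * (F1 + F2))%:E)%E.
Proof.
move=> dmax_ge0; apply: ge_ereal_sup => _ [phi [phiA tn_le1] <-].
have [n [f1 [f2 rep]]] := phiA.
have K_ge0 : 0 <= dmax * (F1 + F2) by rewrite mulr_ge0 ?addr_ge0.
rewrite !(integral_tensor_rep _ _ rep) -EFinB abse_EFin.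
have diff_le n' f1' f2' : tensor_rep A1 A2 phi f1' f2' ->
    `|\sum_(i < n) \int[eta1]_x f1 i x * \int[eta2]_y f2 i y -
      \sum_(i < n) \int[m1]_x f1 i x * \int[m2]_y f2 i y|
    <= dmax * (F1 + F2) * \sum_(i < n') N1 (f1' i) * N2 (f2' i).
  move=> rep'; have same_sum P1 P2 := etrans (esym (integral_tensor_rep P1 P2 rep))
                                             (integral_tensor_rep P1 P2 rep').
  rewrite (EFin_inj (same_sum eta1 eta2)) (EFin_inj (same_sum m1 m2)).
  exact: (tensor_rep_diff_le rep').
apply: le_trans (le_mul_tensor_norm K_ge0 phiA diff_le) _.
by rewrite -[leRHS]mule1 lee_wpmul2l // lee_fin.
Qed.

End tensor_distance.

Theorem lemma7p9 (R : realType) (X1 X2 : ptopologicalType)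
  (hX1 : hausdorff_space X1) (lcX1 : locally_compact [set: X1])
  (hX2 : hausdorff_space X2) (lcX2 : locally_compact [set: X2])
  (A1 : set (X1 -> R)) (A2 : set (X2 -> R))
  (N1 : (X1 -> R) -> R) (N2 : (X2 -> R) -> R)
  (hA1 : subalgebra_Cc A1) (hA2 : subalgebra_Cc A2)
  (hN1 : uniform_norm A1 N1) (hN2 : uniform_norm A2 N2) :
  exists C : R,
    forall (eta1 m1 : probability (borel X1) R)
           (eta2 m2 : probability (borel X2) R),
      (distN (T := (borel X1 * borel X2)%type) (tensor_alg A1 A2)
         (tensor_norm A1 A2 N1 N2) (eta1 \x eta2) (m1 \x m2)
       <= C%:E * maxe (distN (T := borel X1) A1 (fun f => (N1 f)%:E) eta1 m1)
                      (distN (T := borel X2) A2 (fun f => (N2 f)%:E) eta2 m2))%E.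
Proof.
have [F1 F1_ge0 supF1] := uniform_norm_ge0_bound hN1.
have [F2 F2_ge0 supF2] := uniform_norm_ge0_bound hN2.
case: hA1 hA2 hN1 hN2 => CcA1 A1_0 _ scaleA1 _ [CcA2 _ _ scaleA2 _].
move=> [normN1 _] [normN2 _].
have measA1 f : A1 f -> measurable_fun [set: borel X1] f.
  by case/CcA1 => /continuous_borel_measurable.
have measA2 f : A2 f -> measurable_fun [set: borel X2] f.
  by case/CcA2 => /continuous_borel_measurable.
(* The [+ 1] makes the constant positive, so that it does not annihilate an
   infinite distance ([0 * +oo = 0] in [\bar R]). *)
exists (F1 + F2 + 1) => eta1 m1 eta2 m2.
have C_gt0 : 0 < F1 + F2 + 1 by rewrite ltr_wpDl ?addr_ge0.
have dist1_ge0 := distN_ge0 eta1 m1 normN1 A1_0.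
set dist1 := distN _ _ eta1 m1 in dist1_ge0 *; set dist2 := distN _ _ eta2 m2.
have dist1_le : (dist1 <= maxe dist1 dist2)%E by rewrite le_max lexx.
have dist2_le : (dist2 <= maxe dist1 dist2)%E by rewrite le_max lexx orbT.
have := le_trans dist1_ge0 dist1_le.
case: (maxe dist1 dist2) dist1_le dist2_le => [dmax | | ] dist1_le dist2_le; last first.
- by rewrite leeNy_eq.
- by move=> _; rewrite gt0_muley ?lte_fin // leey.
rewrite lee_fin => dmax_ge0.
apply: le_trans (distN_tensor_le (T1 := borel X1) (T2 := borel X2)
  measA1 measA2 scaleA1 scaleA2 normN1 normN2 F1_ge0 F2_ge0 supF1 supF2
  dist1_le dist2_le dmax_ge0) _.
by rewrite -EFinM lee_fin mulrC ler_wpM2r // lerDl.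
Qed.
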